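(* Fix finite-dimensional $\mathcal H_2,\mathcal H_1$, an integer $M\ge1$ and an integer $1\le r\le\dim\mathcal H_1$. Then either for every density operator $\rho$ on $\mathcal H_1$ of rank $r$ there exists an extremal quantum $1$-tester with $M$ outcomes and normalization $I_2\otimes\rho$, or for no density operator $\rho$ of rank $r$ does such an extremal tester exist.
   Context: A quantum $1$-tester with $M$ outcomes is a family of positive operators $\{T_i\}_{i=1}^M$ on $\mathcal H_2\otimes\mathcal H_1$ with $\sum_iT_i=I_2\otimes\rho$ for a density operator $\rho$ on $\mathcal H_1$ (its normalization); extremal means an extreme point of the convex set of all such testers with $M$ outcomes. *)

(* finite-dimensional Hilbert spaces are C^d, with C := algC. *)
From HB Require Import structures.
From mathcomp Require Import all_boot all_order all_algebra all_field.
Set Implicit Arguments. Unset Strict Implicit. Unset Printing Implicit Defensive.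
Import Order.TTheory GRing.Theory Num.Theory.
Local Open Scope ring_scope.

Definition adjmx (m n : nat) (A : 'M[algC]_(m, n)) : 'M[algC]_(n, m) :=
  map_mx Num.conj (A^T).

Definition psd (n : nat) (A : 'M[algC]_n) : Prop :=
  adjmx A = A /\ forall v : 'cV[algC]_n, 0 <= (adjmx v *m A *m v) 0 0.

Definition density (n : nat) (rho : 'M[algC]_n) : Prop :=
  psd rho /\ \tr rho = 1.

(* Kronecker (tensor) product A (x) B on C^m (x) C^n = C^(m*n),
   with basis e_i (x) f_j indexed by mxvec_index i j. *)
Definition kronmx (m n : nat) (A : 'M[algC]_m) (B : 'M[algC]_n) : 'M[algC]_(m * n) :=
  \matrix_(k, l) \sum_(i : 'I_m) \sum_(j : 'I_n) \sum_(i' : 'I_m) \sum_(j' : 'I_n)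
     (if (mxvec_index i j == k) && (mxvec_index i' j' == l)
      then A i i' * B j j' else 0).

(* {T_i} is a quantum 1-tester with M outcomes on H2 (x) H1 (dims d2, d1)
   with normalization I_2 (x) rho *)
Definition tester_with (d2 d1 M : nat) (rho : 'M[algC]_d1)
    (T : 'I_M -> 'M[algC]_(d2 * d1)) : Prop :=
  density rho /\ (forall i, psd (T i)) /\
  \sum_(i < M) T i = kronmx (1%:M : 'M[algC]_d2) rho.

Definition tester (d2 d1 M : nat) (T : 'I_M -> 'M[algC]_(d2 * d1)) : Prop :=
  exists rho : 'M[algC]_d1, tester_with rho T.

Definition extremal_tester (d2 d1 M : nat) (T : 'I_M -> 'M[algC]_(d2 * d1)) : Prop :=
  tester T /\
  forall (T1 T2 : 'I_M -> 'M[algC]_(d2 * d1)) (t : algC),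
    tester T1 -> tester T2 -> 0 < t < 1 ->
    (forall i, T i = t *: T1 i + (1 - t) *: T2 i) ->
    (forall i, T1 i = T i /\ T2 i = T i).

From mathcomp Require Import all_boot all_order all_algebra all_field all_fingroup.
From Stdlib Require Import Classical.
Import Order.TTheory GRing.Theory Num.Theory.
Local Open Scope ring_scope.
Set Implicit Arguments. Unset Strict Implicit.

(* Any two density operators of the same rank are congruent, sigma = S rho S^*
   with S invertible, since both are congruent to the same coordinate projection.
   Congruence by I (x) S maps testers normalized by I (x) rho onto testers
   normalized by I (x) sigma, and its inverse pulls a convex decomposition of the
   image back to a decomposition of the original tester into two elements of the
   cone of unnormalized testers; after rescaling these are convex combinations of
   testers, so extremality transfers. *)

Lemma adjmxK m n (A : 'M[algC]_(m, n)) : adjmx (adjmx A) = A.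
Proof. by apply/matrixP=> i j; rewrite !mxE conjCK. Qed.

Lemma adjmxM m n p (A : 'M[algC]_(m, n)) (B : 'M[algC]_(n, p)) :
  adjmx (A *m B) = adjmx B *m adjmx A.
Proof. by rewrite /adjmx trmx_mul map_mxM. Qed.

Lemma adjmxZ m n a (A : 'M[algC]_(m, n)) : adjmx (a *: A) = a^* *: adjmx A.
Proof. by rewrite /adjmx linearZ map_mxZ. Qed.

Lemma adjmx1 n : adjmx (1%:M : 'M[algC]_n) = 1%:M.
Proof. by rewrite /adjmx trmx1 map_mx1. Qed.

Definition congmx m n (Z : 'M[algC]_(m, n)) (A : 'M[algC]_n) : 'M[algC]_m :=
  Z *m A *m adjmx Z.

Lemma congmxM m n p (Y : 'M[algC]_(m, n)) (Z : 'M[algC]_(n, p)) A :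
  congmx (Y *m Z) A = congmx Y (congmx Z A).
Proof. by rewrite /congmx adjmxM !mulmxA. Qed.

Lemma congmx1 n (A : 'M[algC]_n) : congmx 1%:M A = A.
Proof. by rewrite /congmx adjmx1 mul1mx mulmx1. Qed.

Lemma congmxK m n (Y : 'M[algC]_(m, n)) Z A :
  Y *m Z = 1%:M -> congmx Y (congmx Z A) = A.
Proof. by move=> YZ; rewrite -congmxM YZ congmx1. Qed.

Lemma congmxD m n (Z : 'M[algC]_(m, n)) A B :
  congmx Z (A + B) = congmx Z A + congmx Z B.
Proof. by rewrite /congmx mulmxDr mulmxDl. Qed.

Lemma congmxZ m n (Z : 'M[algC]_(m, n)) c A : congmx Z (c *: A) = c *: congmx Z A.
Proof. by rewrite /congmx -scalemxAr -scalemxAl. Qed.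

Lemma congmx_sum m n (Z : 'M[algC]_(m, n)) (I : finType) (F : I -> 'M[algC]_n) :
  congmx Z (\sum_i F i) = \sum_i congmx Z (F i).
Proof. by rewrite /congmx mulmx_sumr mulmx_suml. Qed.

Lemma congmx0 m n (Z : 'M[algC]_(m, n)) : congmx Z 0 = 0.
Proof. by rewrite /congmx mulmx0 mul0mx. Qed.

Lemma psd_congmx m n (Z : 'M[algC]_(m, n)) A : psd A -> psd (congmx Z A).
Proof.
move=> [hA pA]; split; first by rewrite /congmx !adjmxM adjmxK hA mulmxA.
by move=> v; have := pA (adjmx Z *m v); rewrite /congmx adjmxM adjmxK !mulmxA.
Qed.

Lemma psd0 n : psd (0 : 'M[algC]_n).
Proof.
split; first by apply/matrixP=> i j; rewrite !mxE rmorph0.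
by move=> v; rewrite mulmx0 mul0mx mxE.
Qed.

Lemma psdZ n c (A : 'M[algC]_n) : 0 <= c -> psd A -> psd (c *: A).
Proof.
move=> c0 [hA pA]; split; first by rewrite adjmxZ hA conj_Creal ?ger0_real.
by move=> v; rewrite -scalemxAr -scalemxAl mxE mulr_ge0.
Qed.

Lemma adjmx_delta m n (i : 'I_m) (j : 'I_n) :
  adjmx (delta_mx i j : 'M[algC]_(m, n)) = delta_mx j i.
Proof. by rewrite /adjmx trmx_delta; apply/matrixP=> a b; rewrite !mxE rmorph_nat. Qed.

Lemma psd_diagonalize n (A : 'M[algC]_n) : psd A ->
  exists (U : 'M[algC]_n) (l : 'rV[algC]_n),
    [/\ U *m adjmx U = 1%:M, adjmx U *m U = 1%:M, forall i, 0 <= l 0 i &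
        congmx U A = diag_mx l].
Proof.
move=> [hA pA].
have /hermitian_normalmx/orthomx_spectralP Ae : A \is hermsymmx.
  by apply/is_hermitianmxP; rewrite expr0 scale1r -{1}hA.
set U := spectralmx A in Ae; set l := spectral_diag A in Ae.
have Uu : U \in unitmx := spectral_unit A.
have adjU : adjmx U = invmx U by rewrite invmx_unitary ?spectral_unitarymx.
have UAU : congmx U A = diag_mx l.
  by rewrite /congmx Ae adjU !mulmxA mulmxV // mul1mx -mulmxA mulmxV // mulmx1.
exists U, l; split; rewrite ?adjU ?mulmxV ?mulVmx // => i.
have := pA (adjmx (delta_mx 0 i *m U : 'rV_n)); rewrite adjmxK.
rewrite -[X in 0 <= X]/(congmx (delta_mx 0 i *m U) A 0 0) congmxM.
rewrite UAU /congmx adjmx_delta.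
by rewrite -rowE row_diag_mx -scalemxAl mul_delta_mx !mxE !eqxx mulr1.
Qed.

Lemma psd_tr_gt0 n (A : 'M[algC]_n) : psd A -> A != 0 -> 0 < \tr A.
Proof.
move=> /psd_diagonalize [U [l [_ UU l0 UAU]]] A0.
have trA : \tr A = \sum_i l 0 i.
  by rewrite -mxtrace_diag -UAU /congmx -mulmxA mxtrace_mulC -mulmxA UU mulmx1.
rewrite lt_def trA sumr_ge0 ?andbT => [|i _]; last exact: l0.
apply: contraNneq A0 => /psumr_eq0P l_eq0.
have {}l_eq0 : l = 0 by apply/rowP=> i; rewrite mxE l_eq0.
by rewrite -(congmxK A UU) UAU l_eq0 raddf0 congmx0.
Qed.

Lemma adjmx_unit n (S : 'M[algC]_n) : S \in unitmx -> adjmx S \in unitmx.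
Proof.
move=> Su; have : adjmx S *m adjmx (invmx S) = 1%:M by rewrite -adjmxM mulVmx ?adjmx1.
by case/mulmx1_unit.
Qed.

Lemma mxrank_congmx n (S A : 'M[algC]_n) : S \in unitmx -> \rank (congmx S A) = \rank A.
Proof.
move=> Su; rewrite /congmx mxrankMfree ?row_free_unit ?adjmx_unit //.
by rewrite (eqmxMfull _ (_ : row_full S)) ?row_full_unit.
Qed.

Lemma congmx_diag n (a b : 'rV[algC]_n) :
  congmx (diag_mx a) (diag_mx b) = diag_mx (\row_i (a 0 i * b 0 i * (a 0 i)^*)).
Proof.
rewrite /congmx /adjmx tr_diag_mx map_diag_mx !mulmx_diag.
by congr diag_mx; apply/rowP=> i; rewrite !mxE.
Qed.

Lemma congmx_perm_diag n (p : 'S_n) (d : 'rV[algC]_n) :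
  congmx (perm_mx p) (diag_mx d) = diag_mx (\row_i d 0 (p i)).
Proof.
rewrite /congmx /adjmx tr_perm_mx map_perm_mx -col_permE -row_permE.
by apply/matrixP=> i j; rewrite !mxE (inj_eq perm_inj).
Qed.

Lemma pid_mx_diag n k : pid_mx k = diag_mx (\row_(i < n) (i < k)%N%:R) :> 'M[algC]_n.
Proof.
apply/matrixP=> i j; rewrite !mxE val_eqE.
by case: (eqVneq i j) => [-> | ne]; rewrite ?eqxx ?mulr1n ?mulr0n.
Qed.

Lemma perm_true_prefix n (b : 'I_n -> bool) :
  exists k (p : 'S_n), (k <= n)%N /\ forall i, b (p i) = (i < k)%N.
Proof.
pose t := [tuple b i | i < n]; pose k := count id t.
have kn : (k <= n)%N by rewrite -[n](size_tuple t) count_size.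
have sorted_t : perm_eq (nseq k true ++ nseq (n - k) false) t.
  rewrite perm_sym -(perm_filterC id t).
  have -> : [seq x <- t | id x] = nseq k true.
    by rewrite /k -size_filter; apply/all_pred1P/allP => -[] //; rewrite mem_filter.
  have -> : [seq x <- t | predC id x] = nseq (n - k) false.
    have -> : (n - k = count (predC id) t)%N.
      by rewrite -[in LHS](size_tuple t) -(count_predC id t) addKn.
    rewrite -size_filter.
    by apply/all_pred1P/allP => -[] //; rewrite mem_filter.
  exact: perm_refl.
have [p /(congr1 (fun s => nth false s _)) tp] := tuple_permP sorted_t.
exists k, p; split=> // i; have := tp i.
rewrite /= (nth_map i) ?size_enum_ord // nth_cat size_nseq !nth_nseq.
rewrite tnth_mktuple nth_ord_enum => <-.
by case: ltnP => // _; case: ifP.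
Qed.

Lemma psd_congmx_pid n (A : 'M[algC]_n) : psd A ->
  exists2 P : 'M[algC]_n, P \in unitmx & congmx P A = pid_mx (\rank A).
Proof.
move=> /psd_diagonalize [U [l [UU _ l0 UAU]]].
have Uu : U \in unitmx by case/mulmx1_unit: UU.
have [k [p [kn lp]]] := perm_true_prefix (fun i => l 0 i != 0).
pose a := \row_i (if l 0 i != 0 then (sqrtC (l 0 i))^-1 else 1).
pose P := perm_mx p *m diag_mx a *m U.
have Pu : P \in unitmx.
  rewrite !unitmx_mul unitmx_perm Uu andbT unitmxE det_diag unitfE.
  apply/prodf_neq0 => i _; rewrite mxE; case: ifP => li; last exact: oner_neq0.
  by rewrite invr_eq0 sqrtC_eq0 li.
have PA : congmx P A = pid_mx k.
  rewrite !congmxM UAU congmx_diag congmx_perm_diag pid_mx_diag.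
  congr diag_mx; apply/rowP=> i; rewrite !mxE -lp.
  case: ifP => [lpi | /negbFE/eqP ->]; last by rewrite mulr0 mul0r.
  have s0 : sqrtC (l 0 (p i)) != 0 by rewrite sqrtC_eq0.
  rewrite conj_Creal ?rpredV ?sqrtC_real // -[X in _ * X * _]sqrtCK expr2.
  by rewrite mulrA mulVf // mul1r mulfV.
exists P => //.
by rewrite -(mxrank_congmx A Pu) PA rank_pid_mx.
Qed.

Lemma psd_congruent n (A B : 'M[algC]_n) : psd A -> psd B -> \rank A = \rank B ->
  exists2 S, S \in unitmx & congmx S A = B.
Proof.
move=> /psd_congmx_pid [P Pu PA] /psd_congmx_pid [Q Qu QB] rAB.
exists (invmx Q *m P); first by rewrite unitmx_mul unitmx_inv Qu.
by rewrite congmxM PA rAB -QB congmxK ?mulVmx.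
Qed.

Lemma mxvec_index_eq m n (i i' : 'I_m) (j j' : 'I_n) :
  (mxvec_index i j == mxvec_index i' j') = (i == i') && (j == j').
Proof. by rewrite (inj_eq (@cast_ord_inj _ _ _)) (inj_eq enum_rank_inj). Qed.

Lemma kronE m n (A : 'M[algC]_m) (B : 'M[algC]_n) i j i' j' :
  kronmx A B (mxvec_index i j) (mxvec_index i' j') = A i i' * B j j'.
Proof.
rewrite mxE (big_only1 i) // => [|a ia _]; last first.
  by do 3!apply: big1 => ? _; rewrite mxvec_index_eq (negPf ia).
rewrite (big_only1 j) // => [|b jb _]; last first.
  by do 2!apply: big1 => ? _; rewrite mxvec_index_eq (negPf jb) andbF.
rewrite (big_only1 i') // => [|c ic _]; last first.
  by apply: big1 => ? _; rewrite !mxvec_index_eq (negPf ic) andbF.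
rewrite (big_only1 j') // => [|d jd _]; last by rewrite !mxvec_index_eq (negPf jd) !andbF.
by rewrite !eqxx.
Qed.

Lemma sum_mxvec_index m n (F : 'I_(m * n) -> algC) :
  \sum_k F k = \sum_i \sum_j F (mxvec_index i j).
Proof.
rewrite (reindex _ (curry_mxvec_bij _ _)) /= pair_big /=.
by apply: eq_bigr => -[i j] _.
Qed.

Lemma kronM m n (A C : 'M[algC]_m) (B D : 'M[algC]_n) :
  kronmx A B *m kronmx C D = kronmx (A *m C) (B *m D).
Proof.
apply/matrixP => k l; case/mxvec_indexP: k => i j; case/mxvec_indexP: l => i' j'.
rewrite mxE sum_mxvec_index kronE !mxE big_distrl.
apply: eq_bigr => a _; rewrite big_distrr; apply: eq_bigr => b _.
by rewrite !kronE mulrACA.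
Qed.

Lemma adjmx_kron m n (A : 'M[algC]_m) (B : 'M[algC]_n) :
  adjmx (kronmx A B) = kronmx (adjmx A) (adjmx B).
Proof.
apply/matrixP => k l; case/mxvec_indexP: k => i j; case/mxvec_indexP: l => i' j'.
by rewrite kronE /adjmx [in LHS]mxE [in LHS]mxE kronE !mxE rmorphM.
Qed.

Lemma kron1 m n : kronmx (1%:M : 'M[algC]_m) (1%:M : 'M[algC]_n) = 1%:M.
Proof.
apply/matrixP => k l; case/mxvec_indexP: k => i j; case/mxvec_indexP: l => i' j'.
rewrite kronE !mxE mxvec_index_eq.
by case: (i == i'); case: (j == j'); rewrite ?mulr1 ?mulr0.
Qed.

Lemma kronD m n (A : 'M[algC]_m) (B C : 'M[algC]_n) :
  kronmx A (B + C) = kronmx A B + kronmx A C.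
Proof.
apply/matrixP => k l; case/mxvec_indexP: k => i j; case/mxvec_indexP: l => i' j'.
by rewrite [RHS]mxE !kronE mxE mulrDr.
Qed.

Lemma kronZ m n (A : 'M[algC]_m) c (B : 'M[algC]_n) :
  kronmx A (c *: B) = c *: kronmx A B.
Proof.
apply/matrixP => k l; case/mxvec_indexP: k => i j; case/mxvec_indexP: l => i' j'.
by rewrite [RHS]mxE !kronE mxE mulrCA.
Qed.

Lemma kron1mx_inj m n :
  (0 < m)%N -> injective (kronmx (1%:M : 'M[algC]_m) : 'M_n -> _).
Proof.
move=> m0 X Y /matrixP XY; apply/matrixP => j j'.
have := XY (mxvec_index (Ordinal m0) j) (mxvec_index (Ordinal m0) j').
by rewrite !kronE !mxE eqxx !mul1r.
Qed.

Lemma congmx_kron1 m n (Z Y : 'M[algC]_n) :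
  congmx (kronmx (1%:M : 'M_m) Z) (kronmx 1%:M Y) = kronmx 1%:M (congmx Z Y).
Proof. by rewrite /congmx adjmx_kron adjmx1 !kronM !mulmx1. Qed.

Lemma kron1mxV m n (S : 'M[algC]_n) : S \in unitmx ->
  kronmx (1%:M : 'M_m) (invmx S) *m kronmx 1%:M S = 1%:M.
Proof. by move=> Su; rewrite kronM mulmx1 mulVmx ?kron1. Qed.

Lemma kron1mxKV m n (S : 'M[algC]_n) : S \in unitmx ->
  kronmx (1%:M : 'M_m) S *m kronmx 1%:M (invmx S) = 1%:M.
Proof. by move=> Su; rewrite kronM mulmx1 mulmxV ?kron1. Qed.

Section Testers.
Variables d2 d1 M : nat.
Implicit Types (rho sig : 'M[algC]_d1) (T X Y : 'I_M -> 'M[algC]_(d2 * d1)).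

Definition cone_tester_with sig T : Prop :=
  psd sig /\ (forall i, psd (T i)) /\ \sum_(i < M) T i = kronmx 1%:M sig.

Lemma tester_with_cone rho T : tester_with rho T -> cone_tester_with rho T.
Proof. by case=> -[]. Qed.

Lemma cone_tester_congmx (Z : 'M[algC]_d1) sig T :
  cone_tester_with sig T ->
  cone_tester_with (congmx Z sig) (fun i => congmx (kronmx 1%:M Z) (T i)).
Proof.
move=> [psig [pT sT]]; split; first exact: psd_congmx.
by split=> [i | ]; [exact: psd_congmx | rewrite -congmx_sum sT congmx_kron1].
Qed.

Lemma cone_testerZ c sig T : 0 <= c -> cone_tester_with sig T ->
  cone_tester_with (c *: sig) (fun i => c *: T i).
Proof.
move=> c0 [psig [pT sT]]; split; first exact: psdZ.
by split=> [i | ]; [exact: psdZ | rewrite -scaler_sumr sT kronZ].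
Qed.

Lemma cone_tester_normalize sig T : cone_tester_with sig T -> sig != 0 ->
  tester (fun i => (\tr sig)^-1 *: T i).
Proof.
move=> cT sig0; have tr_gt0 := psd_tr_gt0 cT.1 sig0.
have trV_ge0 : 0 <= (\tr sig)^-1 by rewrite invr_ge0 ltW.
have [psig [pT sT]] := cone_testerZ trV_ge0 cT.
by exists ((\tr sig)^-1 *: sig); do !split=> //; rewrite mxtraceZ mulVf ?gt_eqF.
Qed.

Lemma tester_with_congmx (Z : 'M[algC]_d1) rho T :
  tester_with rho T -> density (congmx Z rho) ->
  tester_with (congmx Z rho) (fun i => congmx (kronmx 1%:M Z) (T i)).
Proof. by move=> /tester_with_cone/(cone_tester_congmx Z)[_ cT]. Qed.

Hypothesis d2_gt0 : (0 < d2)%N.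

Lemma tester_with_scale_eq1 c sig sig' T T' :
  tester_with sig T -> tester_with sig' T' -> (forall i, T' i = c *: T i) -> c = 1.
Proof.
move=> [[_ trsig] [_ sT]] [[_ trsig'] [_ sT']] T'E.
have sig'E : sig' = c *: sig.
  apply: (kron1mx_inj d2_gt0); rewrite -sT' kronZ -sT scaler_sumr.
  by apply: eq_bigr => i _; rewrite T'E.
by move: trsig'; rewrite sig'E mxtraceZ trsig mulr1.
Qed.

Lemma extremal_cone_split rho T sX sY X Y :
  extremal_tester T -> tester_with rho T ->
  cone_tester_with sX X -> cone_tester_with sY Y -> sX != 0 -> sY != 0 ->
  (forall i, T i = X i + Y i) -> forall i, X i = \tr sX *: T i.
Proof.
move=> [_ extT] [[_ trrho] [_ sT]] cX cY sX0 sY0 TE.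
have cX_gt0 := psd_tr_gt0 cX.1 sX0; have cY_gt0 := psd_tr_gt0 cY.1 sY0.
have trXY : \tr sX + \tr sY = 1.
  rewrite -mxtraceD -trrho; congr (\tr _); apply: (kron1mx_inj d2_gt0).
  rewrite kronD -sT -cX.2.2 -cY.2.2 -big_split.
  by apply: eq_bigr => i _; rewrite TE.
have cX_lt1 : \tr sX < 1 by rewrite -trXY ltrDl.
have TE' i : T i = \tr sX *: ((\tr sX)^-1 *: X i) + (1 - \tr sX) *: ((\tr sY)^-1 *: Y i).
  by rewrite -trXY addrAC subrr add0r !scalerA !mulfV ?gt_eqF // !scale1r.
move=> i; have [<- _] := extT _ _ _ (cone_tester_normalize cX sX0)
  (cone_tester_normalize cY sY0) (introT andP (conj cX_gt0 cX_lt1)) TE' i.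
by rewrite scalerA mulfV ?gt_eqF ?scale1r.
Qed.

Lemma extremal_tester_congmx (S : 'M[algC]_d1) rho T :
  S \in unitmx -> density (congmx S rho) ->
  extremal_tester T -> tester_with rho T ->
  extremal_tester (fun i => congmx (kronmx 1%:M S) (T i)).
Proof.
move=> Su dSrho extT twT; set K := kronmx 1%:M S; set T' := fun i => congmx K (T i).
have twT' : tester_with (congmx S rho) T' by apply: tester_with_congmx.
split; first by exists (congmx S rho).
pose K' := kronmx (1%:M : 'M_d2) (invmx S).
suff component u A B sA sB : 0 < u < 1 -> tester_with sA A -> tester_with sB B ->
    (forall i, T' i = u *: A i + (1 - u) *: B i) -> forall i, A i = T' i.
  move=> T1 T2 t [s1 tw1] [s2 tw2] t01 T'E i.
  split; first exact: component t01 tw1 tw2 T'E i.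
  apply: (component (1 - t)) tw2 tw1 _ i.
  - by case/andP: t01 => t0 t1; rewrite subr_gt0 t1 ltrBlDr ltrDl.
  - by move=> j; rewrite T'E subKr addrC.
move=> /andP[u_gt0 u_lt1] twA twB T'E.
have pullback c sC C : 0 < c -> tester_with sC C ->
    cone_tester_with (congmx (invmx S) (c *: sC)) (fun i => congmx K' (c *: C i)) /\
    congmx (invmx S) (c *: sC) != 0.
  move=> c_gt0 twC; split.
    by apply/cone_tester_congmx/cone_testerZ; [exact: ltW | exact: tester_with_cone].
  apply/eqP => /(congr1 (congmx S)); rewrite congmxK ?mulmxV // congmx0.
  move/(congr1 mxtrace); rewrite mxtraceZ twC.1.2 mulr1 mxtrace0 => c0.
  by rewrite c0 ltxx in c_gt0.
have [cA nzA] := pullback u _ _ u_gt0 twA.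
have [cB nzB] := pullback (1 - u) _ _ (etrans (subr_gt0 _ _) u_lt1) twB.
have TE i : T i = congmx K' (u *: A i) + congmx K' ((1 - u) *: B i).
  by rewrite -congmxD -T'E congmxK ?kron1mxV.
have AE := extremal_cone_split extT twT cA cB nzA nzB TE.
set c := \tr (congmx (invmx S) (u *: sA)) in AE.
have A'E i : A i = (u^-1 * c) *: T' i.
  have := congr1 (congmx K) (AE i); rewrite congmxK ?kron1mxKV // congmxZ => uA.
  by rewrite -scalerA -uA scalerA mulVf ?gt_eqF ?scale1r.
by move=> i; rewrite A'E (tester_with_scale_eq1 twT' twA A'E) scale1r.
Qed.
End Testers.

Lemma extremal_tester_dim0 d1 M (rho : 'M[algC]_d1) : density rho ->
  exists T : 'I_M -> 'M[algC]_(0 * d1), extremal_tester T /\ tester_with rho T.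
Proof.
have mx0 (A B : 'M[algC]_(0 * d1)) : A = B by rewrite [A]flatmx0 [B]flatmx0.
move=> drho; exists (fun _ => 0).
have tw : tester_with rho (fun _ : 'I_M => 0 : 'M[algC]_(0 * d1)).
  by split=> //; split=> [i | ]; [exact: psd0 | exact: mx0].
split=> //; split; first by exists rho.
by move=> T1 T2 t _ _ _ _ i; split; apply: mx0.
Qed.

Unset Implicit Arguments.

Theorem mainTheorem7 (d2 d1 M r : nat) (hM : (1 <= M)%N) (hr : (1 <= r <= d1)%N) :
  (forall rho : 'M[algC]_d1, density rho -> \rank rho = r ->
     exists T : 'I_M -> 'M[algC]_(d2 * d1), extremal_tester T /\ tester_with rho T)
  \/
  (forall rho : 'M[algC]_d1, density rho -> \rank rho = r ->
     ~ exists T : 'I_M -> 'M[algC]_(d2 * d1), extremal_tester T /\ tester_with rho T).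
Proof.
case: d2 => [|d2]; first by left=> rho drho _; apply: extremal_tester_dim0.
have [[rho0 [drho0 rk0 [T [extT twT]]]] | none] := classic (exists rho0 : 'M[algC]_d1,
  [/\ density rho0, \rank rho0 = r &
      exists T : 'I_M -> 'M[algC]_(d2.+1 * d1), extremal_tester T /\ tester_with rho0 T]).
  left=> rho drho rk.
  have [S Su Srho] := psd_congruent drho0.1 drho.1 (etrans rk0 (esym rk)).
  exists (fun i => congmx (kronmx 1%:M S) (T i)); rewrite -Srho in drho *.
  by split; [apply: extremal_tester_congmx extT twT | apply: tester_with_congmx].
by right=> rho drho rk ex; apply: none; exists rho.
Qed.
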